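(* Consider the robust multi-robot active target tracking problem and the algorithm RATT described in the context. Let $\mathbf{u}_{\mathcal{V},t}$ be the control inputs returned by RATT, let $(\mathcal{A}_s^\star,\mathcal{A}_c^\star)\in\arg\min_{\mathcal{A}_s\subseteq\mathcal{V},\,|\mathcal{A}_s|\le\alpha_s,\ \mathcal{A}_c\subseteq\mathcal{E},\,|\mathcal{A}_c|\le\alpha_c}\Phi(\mathcal{V}\setminus\mathcal{A}_s,\mathcal{E}\setminus\mathcal{A}_c)$ be a worst-case removal for these inputs, and let $\Phi^\star_{\mathcal{V},\alpha_s,\mathcal{E},\alpha_c}$ be the optimal value of the problem. Let $\alpha_{c,s}$ be the number computed by CAA$(N,\alpha_c)$. Then: 1) if $\Phi$ is non-decreasing and (without loss of generality) normalized and non-negative, then $$\frac{\Phi(\mathcal{V}\setminus\mathcal{A}_s^\star,\mathcal{E}\setminus\mathcal{A}_c^\star)}{\Phi^\star_{\mathcal{V},\alpha_s,\mathcal{E},\alpha_c}}\ \ge\ \min\Big[(1-c_\Phi)^3,\ \frac{(1-c_\Phi)^2}{\alpha_{c,s}}\Big];$$ 2) if, additionally, $\Phi$ is submodular, then $$\frac{\Phi(\mathcal{V}\setminus\mathcal{A}_s^\star,\mathcal{E}\setminus\mathcal{A}_c^\star)}{\Phi^\star_{\mathcal{V},\alpha_s,\mathcal{E},\alpha_c}}\ \ge\ \min\Big[\frac{1-k_\Phi}{1+k_\Phi},\ \frac{1-k_\Phi}{\alpha_{c,s}}\Big].$$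
   Context: Setting. There are $N$ robots $\mathcal{V}=\{1,\dots,N\}$; robot $i$ has dynamics $\mathbf{x}_{i,t+1}=f_i(\mathbf{x}_{i,t},\mathbf{u}_{i,t})$ with $\mathbf{u}_{i,t}$ chosen from a finite set $\mathcal{U}_i$; $\mathcal{U}_{\mathcal{V}}=\bigcup_i\mathcal{U}_i$. Robots track targets with noisy sensors and an extended Kalman filter; communication is modeled by the complete graph on $\mathcal{V}$ with edge set $\mathcal{E}$, $|\mathcal{E}|=N(N-1)/2$. For a choice of control inputs, a set $\mathcal{S}\subseteq\mathcal{V}$ of robots whose sensing is not attacked and a set $\mathcal{L}\subseteq\mathcal{E}$ of non-attacked links, the team tracking quality $\Phi(\mathcal{S},\mathcal{L})$ (one step ahead, a function of the filter's posterior covariance) is the maximum, over the connected components $C$ of the graph $(\mathcal{V},\mathcal{L})$, of the tracking quality obtained by fusing the measurements of the robots in $\mathcal{S}\cap C$ (robots with attacked sensing still relay messages). Without communication attacks, $\Phi(\mathcal{W})$ for $\mathcal{W}\subseteq\mathcal{V}$ denotes the quality from fusing the measurements of robots $\mathcal{W}$; $\Phi$ is regarded as a set function on the robots (with their chosen inputs). The problem (given $\alpha_s\le N$, $\alpha_c\le N(N-1)/2$) is $$\max_{\mathbf{u}_{\mathcal{V},t}\in\mathcal{U}_{\mathcal{V}}}\ \min_{\mathcal{A}_s\subseteq\mathcal{V},|\mathcal{A}_s|\le\alpha_s,\ \mathcal{A}_c\subseteq\mathcal{E},|\mathcal{A}_c|\le\alpha_c}\Phi(\mathcal{V}\setminus\mathcal{A}_s,\mathcal{E}\setminus\mathcal{A}_c),$$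 whose optimal value is $\Phi^\star_{\mathcal{V},\alpha_s,\mathcal{E},\alpha_c}$. CAA$(N,\alpha_c)$: set $e_r=N(N-1)/2-\alpha_c$; for $n=1,2,\dots,N$ in increasing order compute $q_n=\lfloor N/n\rfloor$, $r_n=N-nq_n$, $\bar e_n=q_n\frac{n(n-1)}{2}+\frac{r_n(r_n-1)}{2}$, and let $n_{\max}$ be the first $n$ with $e_r\le\bar e_n$; return $\alpha_{c,s}=N-n_{\max}$. RATT: compute $\alpha_{c,s}$ by CAA and set $\alpha=\alpha_s+\alpha_{c,s}$. If $\alpha<N$: for each robot $i$ compute $\max_{\mathbf{u}_i\in\mathcal{U}_i}\Phi(\{i\})$; let $\mathcal{V}_b$ be $\alpha$ robots with the largest such values (''bait'' robots), and give each the input attaining its individual maximum; then for the remaining robots run the standard greedy algorithm: starting from $\mathcal{V}_g=\emptyset$, repeatedly pick a not-yet-assigned robot $i'\notin\mathcal{V}_b\cup\mathcal{V}_g$ and an input for it maximizing the marginal gain $\Phi(\mathcal{V}_g\cup\{i'\})-\Phi(\mathcal{V}_g)$, and add $i'$ to $\mathcal{V}_g$, until all robots are assigned. If $\alpha\ge N$: give every robot the input maximizing its individual quality $\Phi(\{i\})$. Set-function notions, for $\phi:2^{\mathcal{X}}\to\mathbb{R}$ on finite $\mathcal{X}$: normalized if $\phi(\emptyset)=0$; non-decreasing if $\mathcal{Y}\subseteq\mathcal{Y}'$ implies $\phi(\mathcal{Y})\le\phi(\mathcal{Y}')$; submodular if $\phi(\mathcal{Y}\cup\{x\})-\phi(\mathcal{Y})\ge\phi(\mathcal{Y}'\cup\{x\})-\phi(\mathcal{Y}')$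 for $\mathcal{Y}\subseteq\mathcal{Y}'$. Curvature (non-decreasing submodular $\phi$ with $\phi(\{x\})\ne0$): $k_\phi=1-\min_{x\in\mathcal{X}}\frac{\phi(\mathcal{X})-\phi(\mathcal{X}\setminus\{x\})}{\phi(\{x\})}$. Total curvature (non-decreasing $\phi$): $c_\phi=1-\min_{x\in\mathcal{X}}\min_{\mathcal{Y},\mathcal{Y}'\subseteq\mathcal{X}\setminus\{x\}}\frac{\phi(\mathcal{Y}\cup\{x\})-\phi(\mathcal{Y})}{\phi(\mathcal{Y}'\cup\{x\})-\phi(\mathcal{Y}')}$. *)

From HB Require Import structures.
From mathcomp Require Import all_boot all_order all_algebra.
Set Implicit Arguments. Unset Strict Implicit. Unset Printing Implicit Defensive.
Import Order.TTheory GRing.Theory Num.Theory.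
Local Open Scope ring_scope.

(* Robots are 'I_N.  The ground set U_V of all (robot, control input) pairs is
   a finite type T; [owner x] is the robot to which the pair x belongs, so
   U_i = [set x | owner x == i].  Phi : {set T} -> R is the tracking quality
   as a set function on (robot, input) pairs. *)

Definition normalized (R : numDomainType) (T : finType) (phi : {set T} -> R) :=
  phi set0 = 0.
Definition nondecreasing_set (R : numDomainType) (T : finType)
  (phi : {set T} -> R) := forall A B : {set T}, A \subset B -> phi A <= phi B.
Definition nonnegative_set (R : numDomainType) (T : finType)
  (phi : {set T} -> R) := forall A : {set T}, 0 <= phi A.
Definition submodular (R : numDomainType) (T : finType) (phi : {set T} -> R) :=
  forall (A B : {set T}) (x : T), A \subset B ->
    phi (x |: B) - phi B <= phi (x |: A) - phi A.

Definition gain (R : numDomainType) (T : finType) (phi : {set T} -> R)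
  (Y : {set T}) (x : T) : R := phi (x |: Y) - phi Y.

(* Ratios with zero denominator are +oo (or 0/0) and are omitted from the min;
   the neutral element 1 is harmless since Y = Y' gives ratio 1. *)
Definition total_curvature (R : realFieldType) (T : finType)
  (phi : {set T} -> R) : R :=
  1 - \big[Num.min/1]_(x : T)
        \big[Num.min/1]_(Y : {set T} | Y \subset [set~ x])
          \big[Num.min/1]_(Y' : {set T} | (Y' \subset [set~ x])
                                        && (gain phi Y' x != 0))
             (gain phi Y x / gain phi Y' x).

(* curvature k_phi = 1 - min_x (phi X - phi (X\{x})) / phi {x}, over the x with
   phi {x} != 0 (neutral element 1 harmless: each ratio is <= 1 for
   submodular normalized phi). *)
Definition curvature (R : realFieldType) (T : finType)
  (phi : {set T} -> R) : R :=
  1 - \big[Num.min/1]_(x : T | phi [set x] != 0)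
        ((phi [set: T] - phi ([set: T] :\ x)) / phi [set x]).

(* edge set of the complete graph on 'I_N: unordered pairs {i,j}, i != j *)
Definition edges (N : nat) : {set {set 'I_N}} := [set e : {set 'I_N} | #|e| == 2%N].
Definition linked (N : nat) (L : {set {set 'I_N}}) : rel 'I_N :=
  fun i j => [set i; j] \in L.
Definition comp (N : nat) (L : {set {set 'I_N}}) (i : 'I_N) : {set 'I_N} :=
  [set j | connect (linked L) i j].

Definition valid_assignment (N : nat) (T : finType) (owner : T -> 'I_N)
  (sel : {ffun 'I_N -> T}) := forall i, owner (sel i) = i.

(* Phi(S, L) for the inputs sel: max over connected components C of (V, L)
   of the quality of fusing the measurements of robots S :&: C. *)
Definition PhiSL (R : realDomainType) (N : nat) (T : finType)
  (phi : {set T} -> R) (sel : {ffun 'I_N -> T})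
  (S : {set 'I_N}) (L : {set {set 'I_N}}) : R :=
  \big[Num.max/0]_(i : 'I_N) phi (sel @: (S :&: comp L i)).

Definition admissible (N : nat) (alpha_s alpha_c : nat)
  (As : {set 'I_N}) (Ac : {set {set 'I_N}}) :=
  [&& #|As| <= alpha_s, Ac \subset edges N & #|Ac| <= alpha_c]%N.

Definition worst_value (R : realDomainType) (N : nat) (T : finType)
  (phi : {set T} -> R) (alpha_s alpha_c : nat) (sel : {ffun 'I_N -> T}) : R :=
  \big[Num.min/PhiSL phi sel [set: 'I_N] (edges N)]_(As : {set 'I_N}
        | (#|As| <= alpha_s)%N)
    \big[Num.min/PhiSL phi sel [set: 'I_N] (edges N)]_(Ac : {set {set 'I_N}}
        | (Ac \subset edges N) && (#|Ac| <= alpha_c)%N)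
      PhiSL phi sel (~: As) (edges N :\: Ac).

Definition opt_value (R : realDomainType) (N : nat) (T : finType)
  (owner : T -> 'I_N) (phi : {set T} -> R) (alpha_s alpha_c : nat) : R :=
  \big[Num.max/0]_(sel : {ffun 'I_N -> T} | [forall i, owner (sel i) == i])
    worst_value phi alpha_s alpha_c sel.

Definition ebar (N n : nat) : nat :=
  let q := (N %/ n)%N in let r := (N - n * q)%N in
  (q * (n * (n - 1) %/ 2) + r * (r - 1) %/ 2)%N.
Definition CAA (N alpha_c : nat) : nat :=
  let e_r := (N * (N - 1) %/ 2 - alpha_c)%N in
  let n_max := (find (fun n => (e_r <= ebar N n)%N) (iota 1 N)).+1 in
  (N - n_max)%N.

Definition best_individual (R : realDomainType) (N : nat) (T : finType)
  (owner : T -> 'I_N) (phi : {set T} -> R) (sel : {ffun 'I_N -> T}) (i : 'I_N) :=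
  forall x, owner x = i -> phi [set x] <= phi [set sel i].

Definition RATT_output (R : realDomainType) (N : nat) (T : finType)
  (owner : T -> 'I_N) (phi : {set T} -> R) (alpha_s alpha_c : nat)
  (sel : {ffun 'I_N -> T}) : Prop :=
  let alpha := (alpha_s + CAA N alpha_c)%N in
  valid_assignment owner sel /\
  if (alpha < N)%N then
    exists (Vb : {set 'I_N}) (s : seq 'I_N),
      [/\ #|Vb| = alpha,
          (* bait robots: individual maxima, and the alpha largest ones *)
          (forall i, i \in Vb -> best_individual owner phi sel i),
          (forall i j x, i \in Vb -> j \notin Vb -> owner x = j ->
               phi [set x] <= phi [set sel i]),
          uniq s /\ (forall j, (j \in s) = (j \notin Vb)) &
          (forall s1 r s2, s = s1 ++ r :: s2 ->
             let G := sel @: [set j in s1] in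
             forall x, owner x \notin Vb -> owner x \notin s1 ->
               gain phi G x <= gain phi G (sel r))]
  else forall i, best_individual owner phi sel i.

(* min[a, b / n], where b / 0 is read as +oo *)
Definition min_bound (R : realFieldType) (a b : R) (n : nat) : R :=
  if n == 0%N then a else Num.min a (b / n%:R).

From Pilot Require Import Defs.
From HB Require Import structures.
From mathcomp Require Import all_boot all_order all_algebra.
From mathcomp Require Import zify lra.
Set Implicit Arguments. Unset Strict Implicit. Unset Printing Implicit Defensive.
Import Order.TTheory GRing.Theory Num.Theory.

(** The attack on the links can be traded for attacks on sensing.  Let
    a = CAA(N, alpha_c).  A graph on N vertices whose components have at most
    n vertices has at most ebar N n edges, and n_max is the least n for which
    the e_r surviving links fit; so after any link attack some component keeps
    at least N - a robots.  Conversely, cutting the a (N - a) <= alpha_c links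
    around any a robots isolates them.  RATT is thus analysed as robust
    maximisation against alpha = alpha_s + a removals.  In the large surviving
    component, the baits that survive are at least as many as the non-bait
    robots missing from it, and each bait is individually better than each of
    those.  Against any other choice of inputs, the adversary removes the
    sensing of alpha_s baits and isolates a further a baits spared by the given
    attack: every component then consists either of non-bait robots, whose
    value the greedy stage controls, or of at most a isolated baits.  Both
    curvatures enter only through bounds
    lo * Phi {y} <= Phi (Z + y) - Phi Z <= hi * Phi {y} on marginal gains. *)

(** * Triangular numbers and the threshold of CAA *)

Lemma bin2_divn n : n * (n - 1) %/ 2 = 'C(n, 2).
Proof. by rewrite bin2 -divn2 subn1. Qed.

Lemma bin2D m n : 'C(m + n, 2) = 'C(m, 2) + 'C(n, 2) + m * n.
Proof.
elim: n => [|n IHn]; first by rewrite addn0 muln0 bin0n !addn0.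
by rewrite addnS !binS !bin1 IHn mulnS; lia.
Qed.

Lemma leq_bin2D m n : 'C(m, 2) + 'C(n, 2) <= 'C(m + n, 2).
Proof. by rewrite bin2D leq_addr. Qed.

Lemma leq_bin2_spread u s p v : u <= p -> s <= p -> u + s = p + v ->
  'C(u, 2) + 'C(s, 2) <= 'C(p, 2) + 'C(v, 2).
Proof.
move=> up sp e.
have [x ux] : exists x, u = v + x by exists (u - v); lia.
have [y sy] : exists y, s = v + y by exists (s - v); lia.
have -> : p = v + x + y by lia.
rewrite {}ux {}sy !bin2D; nia.
Qed.

Lemma leq_bin2_mulD k p r : k * 'C(p, 2) + 'C(r, 2) <= 'C(k * p + r, 2).
Proof.
elim: k => [|k IHk] //; rewrite !mulSn -!addnA.
by apply: leq_trans (leq_bin2D _ _); rewrite leq_add2l.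
Qed.

Lemma ebarE N n : ebar N n = N %/ n * 'C(n, 2) + 'C(N %% n, 2).
Proof.
rewrite /ebar !bin2_divn; congr (_ + 'C(_, 2)).
by rewrite {1}(divn_eq N n) mulnC addKn.
Qed.

Lemma ebar_mulD q p u : u < p -> ebar (q * p + u) p = q * 'C(p, 2) + 'C(u, 2).
Proof.
move=> up; have p_gt0 : 0 < p by apply: leq_ltn_trans up.
by rewrite ebarE divnMDl // modnMDl divn_small ?modn_small ?addn0.
Qed.

Lemma ebar_le_bin2 a p : 0 < p -> ebar a p <= 'C(a, 2).
Proof.
by move=> p_gt0; rewrite (divn_eq a p) ebar_mulD ?ltn_pmod ?leq_bin2_mulD.
Qed.

Lemma ebar_addr a s p : 0 < p -> s <= p -> ebar a p + 'C(s, 2) <= ebar (a + s) p.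
Proof.
move=> p_gt0 sp; have up := ltn_pmod a p_gt0.
rewrite (divn_eq a p) (ebar_mulD _ up) -!addnA.
set q := a %/ p; set u := a %% p.
have [usp|psu] := ltnP (u + s) p.
  by rewrite ebar_mulD // leq_add2l leq_bin2D.
have -> : q * p + (u + s) = q.+1 * p + (u + s - p) by rewrite mulSn; lia.
rewrite ebar_mulD; last by lia.
have := @leq_bin2_spread u s p (u + s - p) (ltnW up) sp; rewrite mulSn; lia.
Qed.

Lemma sum_bin2_le_ebar (I : Type) (r : seq I) (P : pred I) (F : I -> nat) p :
  0 < p -> (forall i, P i -> F i <= p) ->
  \sum_(i <- r | P i) 'C(F i, 2) <= ebar (\sum_(i <- r | P i) F i) p.
Proof.
move=> p_gt0 Fp; apply: (big_rec2 (fun c n => c <= ebar n p)) => [|i c n Pi le_cn].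
  by rewrite ebarE div0n.
rewrite addnC [F i + n]addnC.
exact: leq_trans (leq_add le_cn (leqnn _)) (ebar_addr n p_gt0 (Fp i Pi)).
Qed.

Lemma ebar_le_split N n : 0 < n <= N -> ebar N n <= 'C(n, 2) + 'C(N - n, 2).
Proof.
case/andP=> n_gt0 nN; have rn := ltn_pmod N n_gt0.
have [q eN] : exists q, N = q.+1 * n + N %% n.
  exists (N %/ n).-1; rewrite prednK ?divn_gt0 //; exact: divn_eq.
rewrite eN ebar_mulD // mulSn -addnA leq_add2l.
have -> : q.+1 * n + N %% n - n = q * n + N %% n by rewrite mulSn; lia.
by rewrite -ebar_mulD // ebar_le_bin2.
Qed.

Lemma CAA_spec N ac : 0 < N -> ac <= 'C(N, 2) ->
  exists2 n, 0 < n <= N &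
    [/\ 'C(N, 2) - ac <= ebar N n,
        (forall p, 0 < p < n -> ebar N p < 'C(N, 2) - ac) & CAA N ac = N - n].
Proof.
move=> N_gt0 acN; rewrite /CAA bin2_divn.
set P := fun n => 'C(N, 2) - ac <= ebar N n.
have hasP : has P (iota 1 N).
  apply/hasP; exists N; first by rewrite mem_iota; lia.
  by rewrite /P ebarE divnn N_gt0 modnn mul1n addn0 leq_subr.
have ltN : find P (iota 1 N) < N by rewrite -[X in _ < X](size_iota 1 N) -has_find.
exists (find P (iota 1 N)).+1; first by lia.
split=> //; first by have := nth_find 0 hasP; rewrite nth_iota // add1n.
move=> p /andP[p_gt0 lt_p]; have lt_pf : p.-1 < find P (iota 1 N) by lia.
have := before_find 0 lt_pf; rewrite nth_iota; last by lia.
by rewrite add1n prednK // /P => /negbT; rewrite -ltnNge.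
Qed.

Lemma CAA_mul_le N ac : ac <= 'C(N, 2) -> CAA N ac * (N - CAA N ac) <= ac.
Proof.
case: N => [|N] acN; first by rewrite /CAA.
have [n /andP[n_gt0 nN] [er_le _ ->]] := CAA_spec (ltn0Sn N) acN.
have := ebar_le_split (introT andP (conj n_gt0 nN)).
have := bin2D n (N.+1 - n); rewrite subnKC //; lia.
Qed.

(** * Connected components under link removal *)

Lemma card_edges N : #|edges N| = 'C(N, 2).
Proof. by rewrite /edges card_draws card_ord. Qed.

Lemma linked_sym N (L : {set {set 'I_N}}) : symmetric (linked L).
Proof. by move=> i j; rewrite /linked setUC. Qed.

Lemma mem_comp N (L : {set {set 'I_N}}) i : i \in Defs.comp L i.
Proof. by rewrite inE connect0. Qed.

Lemma card_comp_gt0 N (L : {set {set 'I_N}}) i : 0 < #|Defs.comp L i|.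
Proof. by apply/card_gt0P; exists i; apply: mem_comp. Qed.

Lemma card_bigcup_le (I T : finType) (P : {pred I}) (F : I -> {set T}) :
  #|\bigcup_(i in P) F i| <= \sum_(i in P) #|F i|.
Proof.
apply: (big_ind2 (fun (A : {set T}) n => #|A| <= n)) => [|A m B n le_Am le_Bn|//].
  by rewrite cards0.
exact: leq_trans (leq_card_setU A B) (leq_add le_Am le_Bn).
Qed.

Lemma card_le_ebar N (L : {set {set 'I_N}}) p : 0 < p -> L \subset edges N ->
  (forall i, #|Defs.comp L i| <= p) -> #|L| <= ebar N p.
Proof.
move=> p_gt0 LE le_comp.
have eq_connect : {in [set: 'I_N] & &, equivalence_rel (connect (linked L))}.
  move=> i j k _ _ _; split=> [|ij]; first exact: connect0.
  apply/idP/idP => [ik|jk]; last exact: connect_trans ij jk.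
  by apply: connect_trans ik; rewrite (sym_connect_sym (@linked_sym N L)).
set P : {set {set 'I_N}} := [set Defs.comp L i | i in [set: 'I_N]].
have partP : partition P [set: 'I_N].
  have -> : P = equivalence_partition (connect (linked L)) [set: 'I_N].
    by apply: eq_imset => i; apply/setP => j; rewrite !inE.
  exact: equivalence_partitionP.
have le_P : forall C, C \in P -> #|C| <= p by move=> C /imsetP[i _ ->].
set pairs := fun C : {set 'I_N} => [set e : {set 'I_N} | e \subset C & #|e| == 2].
have L_sub : L \subset \bigcup_(C in P) pairs C.
  apply/subsetP => e eL; have := subsetP LE e eL; rewrite inE => /cards2P[i [j [ij e_ij]]].
  apply/bigcupP; exists (Defs.comp L i); first exact: imset_f.
  rewrite inE e_ij cards2 ij subUset !sub1set mem_comp inE andbT /=.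
  by apply: connect1; rewrite /linked -e_ij.
apply: leq_trans (subset_leq_card L_sub) _.
apply: leq_trans (card_bigcup_le P pairs) _.
rewrite [X in ebar X p](_ : N = \sum_(C in P) #|C|); last first.
  by rewrite -(card_partition partP) cardsT card_ord.
rewrite (eq_bigr (fun C : {set 'I_N} => 'C(#|C|, 2))) => [|C _]; last exact: cards_draws.
exact: sum_bin2_le_ebar.
Qed.

Lemma CAA_large_component N ac (Ac : {set {set 'I_N}}) :
  0 < N -> ac <= 'C(N, 2) -> #|Ac| <= ac ->
  exists i, N - CAA N ac <= #|Defs.comp (edges N :\: Ac) i|.
Proof.
move=> N_gt0 acN Ac_le; have [n /andP[n_gt0 nN] [_ ebar_lt ->]] := CAA_spec N_gt0 acN.
rewrite subKn //; apply/existsP; apply: contraT; rewrite negb_exists => /forallP small.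
have le_comp i : #|Defs.comp (edges N :\: Ac) i| <= n.-1.
  by have := small i; rewrite -ltnNge; lia.
have [n1|n_gt1] := leqP n 1.
  have := le_comp (Ordinal N_gt0).
  by have := card_comp_gt0 (edges N :\: Ac) (Ordinal N_gt0); lia.
have n1_gt0 : 0 < n.-1 by lia.
have lt_er : ebar N n.-1 < 'C(N, 2) - ac by apply: ebar_lt; lia.
have := card_le_ebar n1_gt0 (subsetDl _ _) le_comp.
have := cardsID Ac (edges N); have := subset_leq_card (subsetIr (edges N) Ac).
rewrite card_edges; lia.
Qed.

Definition cut N (B : {set 'I_N}) : {set {set 'I_N}} :=
  [set e in edges N | ~~ (e \subset B) && ~~ (e \subset ~: B)].

Lemma card_cut N (B : {set 'I_N}) : #|cut B| <= #|B| * #|~: B|.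
Proof.
rewrite -cardsX; apply: leq_trans (leq_imset_card (fun ij => [set ij.1; ij.2]) _).
apply: subset_leq_card; apply/subsetP => e; rewrite !inE => /andP[/cards2P[i [j [_ ->]]]].
rewrite !subUset !sub1set !inE; case iB: (i \in B); case jB: (j \in B) => //= _.
  by apply/imsetP; exists (i, j); rewrite ?inE ?iB ?jB.
by apply/imsetP; exists (j, i); rewrite ?inE ?iB ?jB // setUC.
Qed.

Lemma connect_cut N (B : {set 'I_N}) i j :
  connect (linked (edges N :\: cut B)) i j -> (i \in B) = (j \in B).
Proof.
apply: closed_connect => u v; rewrite /linked !inE => /andP[/negP not_cut e2].
by case uB: (u \in B); case vB: (v \in B) => //; case: not_cut;
  rewrite e2 !subUset !sub1set !inE uB vB.
Qed.

Lemma cardsC_ord N (A : {set 'I_N}) : #|~: A| = N - #|A|.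
Proof. by rewrite cardsCs setCK card_ord. Qed.

Lemma exists_subset_card (I : finType) (A : {set I}) k : k <= #|A| ->
  exists2 B : {set I}, B \subset A & #|B| = k.
Proof.
elim: k => [|k IHk] le_kA; first by exists set0; rewrite ?sub0set ?cards0.
have [B BA cardB] := IHk (ltnW le_kA).
have [x xA xB] : exists2 x, x \in A & x \notin B.
  by apply/subsetPn; apply: contraTN le_kA => /subset_leq_card; rewrite cardB -ltnNge ltnS.
exists (x |: B); first by rewrite subUset sub1set xA.
by rewrite cardsU1 xB cardB.
Qed.

Local Open Scope ring_scope.

(** * Marginal gains and curvature *)

Section Gain.
Variables (R : numDomainType) (T : finType) (f : {set T} -> R).
Implicit Types (X Y Z : {set T}) (y : T).

Lemma gain_ge0 : nondecreasing_set f -> forall Z y, 0 <= gain f Z y.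
Proof. by move=> fmono Z y; rewrite subr_ge0 fmono // subsetUr. Qed.

Lemma gain0 : normalized f -> forall y, gain f set0 y = f [set y].
Proof. by move=> f0 y; rewrite /gain setU0 f0 subr0. Qed.

Lemma setU1_gain Z y : f (y |: Z) = f Z + gain f Z y.
Proof. by rewrite addrC subrK. Qed.

Lemma sum_gain_lb (g : T -> R) :
    (forall (Z : {set T}) y, y \notin Z -> g y <= gain f Z y) ->
  forall X Y, [disjoint X & Y] -> f X + \sum_(y in Y) g y <= f (X :|: Y).
Proof.
move=> g_le X Y; have [n] := ubnP #|Y|; elim: n Y => // n IHn Y ltYn dXY.
have [->|[y yY]] := set_0Vmem Y; first by rewrite big_set0 setU0 addr0.
have dXY' : [disjoint X & Y :\ y] by apply: disjointWr dXY; apply: subsetDl.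
have y_out : y \notin X :|: Y :\ y.
  by rewrite !inE eqxx /= orbF; apply: contraTN yY => yX; rewrite (disjointFr dXY yX).
have -> : X :|: Y = y |: (X :|: Y :\ y) by rewrite setUCA setD1K.
rewrite (big_setD1 y yY) /= setU1_gain addrCA [leRHS]addrC.
apply: lerD (g_le _ _ y_out) (IHn _ _ dXY').
by move: ltYn; rewrite (cardsD1 y Y) yY.
Qed.

End Gain.

Lemma sum_gain_ub (R : numDomainType) (T : finType) (f : {set T} -> R) (h : T -> R) :
    (forall (Z : {set T}) y, y \notin Z -> gain f Z y <= h y) ->
  forall X Y : {set T}, [disjoint X & Y] -> f (X :|: Y) <= f X + \sum_(y in Y) h y.
Proof.
move=> le_h X Y dXY; rewrite -lerN2 opprD -sumrN.
apply: (sum_gain_lb (f := fun A => - f A)) dXY => Z y yZ.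
by rewrite /gain opprK addrC -opprB lerN2 le_h.
Qed.

Lemma notin_subsetC1 (T : finType) (Y : {set T}) y : (Y \subset [set~ y]) = (y \notin Y).
Proof. by rewrite subsetC sub1set inE. Qed.

Section Curvature.
Variables (R : realFieldType) (T : finType) (f : {set T} -> R).
Implicit Types (Y Z : {set T}) (y : T).
Hypothesis fmono : nondecreasing_set f.
Hypothesis fnn : nonnegative_set f.

Lemma total_curvature_ge0 : 0 <= total_curvature f.
Proof. by rewrite subr_ge0 bigmin_le_id. Qed.

Lemma total_curvature_le1 : total_curvature f <= 1.
Proof.
rewrite gerBl; do 3!apply: le_bigmin => // *.
by apply: divr_ge0; apply: gain_ge0.
Qed.

Lemma total_curvature_gain y Y Y' : y \notin Y -> y \notin Y' ->
  (1 - total_curvature f) * gain f Y' y <= gain f Y y.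
Proof.
move=> yY yY'; rewrite subKr.
have [->|g_neq0] := eqVneq (gain f Y' y) 0; first by rewrite mulr0 gain_ge0.
have g_gt0 : 0 < gain f Y' y by rewrite lt0r g_neq0 gain_ge0.
rewrite -ler_pdivlMr //; apply: (bigmin_inf y) => //.
apply: (bigmin_inf Y); first by rewrite notin_subsetC1.
by apply: (bigmin_inf Y'); rewrite ?notin_subsetC1 ?yY' ?g_neq0.
Qed.

Lemma curvature_ge0 : 0 <= curvature f.
Proof. by rewrite subr_ge0 bigmin_le_id. Qed.

Lemma curvature_le1 : curvature f <= 1.
Proof.
rewrite gerBl; apply: le_bigmin => // y _.
by apply: divr_ge0; rewrite ?subr_ge0 ?fmono ?subsetT.
Qed.

Lemma curvature_gain : submodular f -> forall Z y, y \notin Z ->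
  (1 - curvature f) * f [set y] <= gain f Z y.
Proof.
move=> fsub Z y yZ; rewrite subKr.
have [->|fy_neq0] := eqVneq (f [set y]) 0; first by rewrite mulr0 gain_ge0.
have fy_gt0 : 0 < f [set y] by rewrite lt0r fy_neq0 fnn.
rewrite -ler_pdivlMr //; apply: (bigmin_inf y); first exact: fy_neq0.
rewrite ler_pdivrMr // (mulfVK fy_neq0).
have -> : f [set: T] - f ([set: T] :\ y) = gain f ([set: T] :\ y) y.
  by rewrite /gain setD1K ?inE.
by apply: fsub; apply/subsetP => z zZ; rewrite !inE andbT; apply: contraNneq yZ => <-.
Qed.

End Curvature.

Lemma submodular_gain_le (R : numDomainType) (T : finType) (f : {set T} -> R) :
  normalized f -> submodular f -> forall Z y, gain f Z y <= f [set y].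
Proof. by move=> f0 fsub Z y; rewrite -gain0 // fsub ?sub0set. Qed.

Section MinBound.
Variable R : realFieldType.
Implicit Types a b : R.

Lemma min_bound_ge0 a b n : 0 <= a -> 0 <= b -> 0 <= min_bound a b n.
Proof.
by move=> a_ge0 b_ge0; rewrite /min_bound; case: eqP => // _; rewrite le_min a_ge0 divr_ge0.
Qed.

Lemma min_bound_le a b n : min_bound a b n <= a.
Proof. by rewrite /min_bound; case: eqP => // _; rewrite ge_min lexx. Qed.

Lemma min_bound_mulr_le a b n : 0 <= b -> min_bound a b n * n%:R <= b.
Proof.
move=> b_ge0; rewrite /min_bound; case: eqP => [->|/eqP n_neq0]; first by rewrite mulr0.
by rewrite -ler_pdivlMr ?ltr0n ?lt0n // ge_min lexx orbT.
Qed.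

End MinBound.

Lemma mulr_bigmax_le (R : realDomainType) (I : finType) (P : pred I) (F : I -> R) (b M : R) :
  0 <= b -> 0 <= M -> (forall i, P i -> b * F i <= M) ->
  b * \big[Num.max/0]_(i | P i) F i <= M.
Proof.
move=> b_ge0 M_ge0 le_M; elim/big_ind: _ => [|x y|//]; first by rewrite mulr0.
by rewrite /Num.max; case: ifP.
Qed.

Lemma ler_sum_card (R : realDomainType) (I : finType) (A B : {set I}) (u v : I -> R) :
  (#|A| <= #|B|)%N -> (forall i j, i \in A -> j \in B -> u i <= v j) ->
  (forall j, j \in B -> 0 <= v j) ->
  \sum_(i in A) u i <= \sum_(j in B) v j.
Proof.
move=> le_AB le_uv v_ge0; have [B0|[j0 j0B]] := set_0Vmem B.
  by move: le_AB; rewrite B0 cards0 leqn0 cards_eq0 => /eqP->; rewrite !big_set0.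
set m := \big[Num.min/v j0]_(j in B) v j.
have le_m : forall i, i \in A -> u i <= m.
  by move=> i iA; apply: le_bigmin => [|j jB]; apply: le_uv.
have m_le : forall j, j \in B -> m <= v j by move=> j jB; apply: bigmin_le_cond.
have m_ge0 : 0 <= m := le_bigmin _ (v_ge0 j0 j0B) v_ge0.
have le_mA : \sum_(i in A) m <= \sum_(j in B) m.
  by rewrite !sumr_const ler_wpMn2l.
exact: le_trans (ler_sum _ le_m) (le_trans le_mA (ler_sum _ m_le)).
Qed.

(** * Team values and the greedy stage *)

Section Team.
Variables (R : realFieldType) (N : nat) (T : finType) (owner : T -> 'I_N).
Variable f : {set T} -> R.
Implicit Types (O sel : {ffun 'I_N -> T}) (S A : {set 'I_N}) (L : {set {set 'I_N}}).
Implicit Types (Z : {set T}) (y : T).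

Lemma valid_assignment_inj O : valid_assignment owner O -> injective O.
Proof. exact: can_inj. Qed.

Lemma PhiSL_ge0 sel S L : 0 <= PhiSL f sel S L.
Proof. exact: bigmax_ge_id. Qed.

Lemma PhiSL_ge_comp sel S L i : f (sel @: (S :&: Defs.comp L i)) <= PhiSL f sel S L.
Proof. exact: le_bigmax. Qed.

Lemma PhiSL_ge_set1 sel S L j :
  nondecreasing_set f -> j \in S -> f [set sel j] <= PhiSL f sel S L.
Proof.
move=> fmono jS; apply: le_trans (PhiSL_ge_comp sel S L j).
by rewrite fmono // sub1set imset_f // inE jS mem_comp.
Qed.

Lemma owner_imset O A x : valid_assignment owner O -> x \in O @: A -> owner x \in A.
Proof. by move=> validO /imsetP[j jA ->]; rewrite validO. Qed.

Lemma worst_value_le alpha_s alpha_c O As Ac : admissible alpha_s alpha_c As Ac ->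
  worst_value f alpha_s alpha_c O <= PhiSL f O (~: As) (edges N :\: Ac).
Proof.
case/and3P=> As_le Ac_sub Ac_le; apply: (bigmin_inf As) => //.
by apply: (bigmin_inf Ac); rewrite ?Ac_sub.
Qed.

Lemma imset_le_card (hi M : R) O A : normalized f -> 0 <= hi ->
  (forall Z y, y \notin Z -> gain f Z y <= hi * f [set y]) ->
  valid_assignment owner O -> (forall i, i \in A -> f [set O i] <= M) ->
  f (O @: A) <= hi * (#|A|%:R * M).
Proof.
move=> f0 hi_ge0 le_hi validO le_M.
have d0A : [disjoint set0 & O @: A] by rewrite -setI_eq0 set0I.
have := sum_gain_ub le_hi d0A; rewrite set0U f0 add0r -mulr_sumr.
rewrite big_imset /=; last by move=> i j _ _; apply: valid_assignment_inj.
move/le_trans; apply; rewrite ler_wpM2l // mulr_natl -sumr_const.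
exact: ler_sum.
Qed.

End Team.

Lemma set_mem_rcons (T : finType) (l : seq T) r : [set j in rcons l r] = r |: [set j in l].
Proof. by apply/setP => j; rewrite !inE mem_rcons in_cons. Qed.

Lemma set_mem_nil (T : finType) : [set j in [::] : seq T] = set0.
Proof. by apply/setP => j; rewrite !inE. Qed.

Definition greedy_order (R : numDomainType) (N : nat) (T : finType) (owner : T -> 'I_N)
    (f : {set T} -> R) (sel : {ffun 'I_N -> T}) (Vb : {set 'I_N}) (s : seq 'I_N) :=
  forall s1 r s2, s = s1 ++ r :: s2 ->
    let G := sel @: [set j in s1] in
    forall x, owner x \notin Vb -> owner x \notin s1 -> gain f G x <= gain f G (sel r).

Section Greedy.
Variables (R : realFieldType) (N : nat) (T : finType) (owner : T -> 'I_N).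
Variables (f : {set T} -> R) (sel O : {ffun 'I_N -> T}) (Vb : {set 'I_N}) (s : seq 'I_N).
Hypothesis f0 : normalized f.
Hypothesis fmono : nondecreasing_set f.
Hypothesis sel_valid : valid_assignment owner sel.
Hypothesis O_valid : valid_assignment owner O.
Hypothesis s_uniq : uniq s.
Hypothesis mem_s : forall j, (j \in s) = (j \notin Vb).
Hypothesis s_greedy : greedy_order owner f sel Vb s.

Lemma greedy_step l r s2 : s = rcons l r ++ s2 ->
  [/\ r \notin l, r \notin Vb &
      forall x, owner x = r ->
        gain f (sel @: [set j in l]) x <= gain f (sel @: [set j in l]) (sel r)].
Proof.
rewrite cat_rcons => e; have r_l : r \notin l.
  by move: s_uniq; rewrite e cat_uniq /= => /and3P[_ /norP[/negP ? _] _]; apply/negP.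
have r_Vb : r \notin Vb by rewrite -mem_s e mem_cat inE eqxx orbT.
by split=> // x ox; apply: (s_greedy e); rewrite ox.
Qed.

Lemma notin_imset_prefix g g' l r s2 : s = rcons l r ++ s2 ->
  valid_assignment owner g -> valid_assignment owner g' -> g' r \notin g @: [set j in l].
Proof.
move=> e g_valid g'_valid; have [r_l _ _] := greedy_step e.
by apply: contra r_l => /(owner_imset g_valid); rewrite g'_valid inE.
Qed.

Lemma greedy_total_curvature :
  (1 - total_curvature f) * f (O @: ~: Vb) <= f (sel @: ~: Vb).
Proof.
suff prefix_le l s2 : s = l ++ s2 ->
    (1 - total_curvature f) * f (O @: [set j in l]) <= f (sel @: [set j in l]).
  have -> : ~: Vb = [set j in s] by apply/setP => j; rewrite !inE mem_s.
  exact: (prefix_le s [::] (esym (cats0 s))).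
elim/last_ind: l s2 => [|l r IHl] s2 e; first by rewrite set_mem_nil !imset0 f0 mulr0.
have [_ _ le_r] := greedy_step e.
rewrite set_mem_rcons !imsetU1 !setU1_gain mulrDr.
apply: lerD (IHl _ _) _; first by rewrite e cat_rcons.
apply: le_trans (le_r _ (O_valid r)); apply: total_curvature_gain => //.
  exact: notin_imset_prefix e sel_valid O_valid.
exact: notin_imset_prefix e O_valid O_valid.
Qed.

Hypothesis fnn : nonnegative_set f.
Hypothesis fsub : submodular f.

Lemma greedy_curvature_step l r s2 : s = rcons l r ++ s2 ->
  gain f ((sel @: ~: Vb) :|: O @: [set j in l]) (O r)
    - gain f ((O @: ~: Vb) :|: sel @: [set j in l]) (sel r)
  <= curvature f * gain f (sel @: [set j in l]) (sel r).
Proof.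
move=> e; have [_ r_Vb le_r] := greedy_step e.
set d := gain f (sel @: [set j in l]) (sel r).
have k_ge0 := curvature_ge0 f; have k_le1 := curvature_le1 fmono fnn.
have d_ge0 : 0 <= d by apply: gain_ge0.
have [eq_r|neq_r] := eqVneq (O r) (sel r).
  have -> : gain f ((sel @: ~: Vb) :|: O @: [set j in l]) (O r) = 0.
    by rewrite /gain (setUidPr _) ?subrr // sub1set inE eq_r imset_f ?inE.
  by rewrite sub0r (le_trans _ (mulr_ge0 k_ge0 d_ge0)) // oppr_le0 gain_ge0.
have le_d : gain f ((sel @: ~: Vb) :|: O @: [set j in l]) (O r) <= d.
  apply: le_trans (le_r _ (O_valid r)); apply: fsub; apply: subsetU; apply/orP; left.
  apply: imsetS; apply/subsetP => j; rewrite !inE -mem_s e mem_cat mem_rcons in_cons => ->.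
  by rewrite orbT.
have sel_r_out : sel r \notin (O @: ~: Vb) :|: sel @: [set j in l].
  rewrite in_setU negb_or (notin_imset_prefix e sel_valid sel_valid) andbT.
  by apply: contra neq_r => /imsetP[j _ eq_j]; rewrite eq_j -(O_valid j) -eq_j sel_valid.
have := curvature_gain fmono fnn fsub sel_r_out.
have := submodular_gain_le f0 fsub (sel @: [set j in l]) (sel r).
rewrite -/d => d_le le_gain.
have kappa_ge0 : 0 <= 1 - curvature f by rewrite subr_ge0.
have := ler_wpM2l kappa_ge0 d_le; nra.
Qed.

Lemma greedy_curvature : f (O @: ~: Vb) <= (1 + curvature f) * f (sel @: ~: Vb).
Proof.
set P := sel @: ~: Vb; set Q := O @: ~: Vb.
(* Grow [P] by the inputs of [O] and [Q] by those of [sel], robot by robot in greedy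
   order: the two increments differ by at most [curvature f] times the greedy gain. *)
suff prefix_le l s2 : s = l ++ s2 ->
    f (P :|: O @: [set j in l]) - f P - (f (Q :|: sel @: [set j in l]) - f Q)
      <= curvature f * f (sel @: [set j in l]).
  have eq_s : [set j in s] = ~: Vb by apply/setP => j; rewrite !inE mem_s.
  have := prefix_le s [::] (esym (cats0 s)); rewrite eq_s -/P -/Q setUC; lra.
elim/last_ind: l s2 => [|l r IHl] s2 e.
  by rewrite set_mem_nil !imset0 !setU0 f0 mulr0 !subrr.
rewrite set_mem_rcons !imsetU1 (setUCA P) (setUCA Q) !setU1_gain mulrDr.
have := greedy_curvature_step e; rewrite -/P -/Q.
have := IHl _ (etrans e (cat_rcons _ _ _)); lra.
Qed.

End Greedy.

(** * Attacks *)

Section Attack.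
Variables (R : realFieldType) (N : nat) (T : finType) (owner : T -> 'I_N).
Variables (f : {set T} -> R) (alpha_s alpha_c : nat) (sel : {ffun 'I_N -> T}).
Variables (As : {set 'I_N}) (Ac : {set {set 'I_N}}).
Hypothesis f0 : normalized f.
Hypothesis fmono : nondecreasing_set f.
Hypothesis fnn : nonnegative_set f.
Hypothesis alpha_s_le : (alpha_s <= N)%N.
Hypothesis alpha_c_le : (alpha_c <= 'C(N, 2))%N.
Hypothesis ratt : RATT_output owner f alpha_s alpha_c sel.
Hypothesis adm : admissible alpha_s alpha_c As Ac.

Let sel_valid : valid_assignment owner sel := proj1 ratt.

Local Notation W := (PhiSL f sel (~: As) (edges N :\: Ac)).
Local Notation a := (CAA N alpha_c).

Lemma W_ge0 : 0 <= W.
Proof. exact: PhiSL_ge0. Qed.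

Lemma W_ge_sel j : j \notin As -> f [set sel j] <= W.
Proof. by move=> jAs; apply: PhiSL_ge_set1; rewrite ?inE. Qed.

Section Sandwich.
Variables lo hi : R.
Hypothesis lo_ge0 : 0 <= lo.
Hypothesis lo_le_hi : lo <= hi.
Hypothesis gain_lb : forall (Z : {set T}) y, y \notin Z -> lo * f [set y] <= gain f Z y.
Hypothesis gain_ub : forall (Z : {set T}) y, y \notin Z -> gain f Z y <= hi * f [set y].

Lemma hi_ge0 : 0 <= hi. Proof. exact: le_trans lo_ge0 lo_le_hi. Qed.

Lemma small_team_le O (A : {set 'I_N}) : valid_assignment owner O -> (#|A| <= a)%N ->
  (forall j, j \in A -> f [set O j] <= f [set sel j] /\ j \notin As) ->
  f (O @: A) <= hi * (a%:R * W).
Proof.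
move=> O_valid le_A le_sel.
apply: le_trans (imset_le_card f0 hi_ge0 gain_ub O_valid (M := W) _) _.
  by move=> j /le_sel[le_j jAs]; apply: le_trans le_j (W_ge_sel jAs).
by rewrite ler_wpM2l ?hi_ge0 // ler_wpM2r ?W_ge0 // ler_nat.
Qed.

Lemma bait_exchange (Vb S : {set 'I_N}) : (#|~: Vb| <= #|S|)%N ->
  (forall i j x, i \in Vb -> j \notin Vb -> owner x = j -> f [set x] <= f [set sel i]) ->
  lo * f (sel @: ~: Vb) <= hi * f (sel @: S).
Proof.
move=> card_S bait_dom.
set G2 := S :\: Vb; set B2 := S :&: Vb; set G1 := ~: Vb :\: S.
have sel_inj : injective sel := valid_assignment_inj sel_valid.
have disj_img (X Y : {set 'I_N}) : [disjoint X & Y] -> [disjoint sel @: X & sel @: Y].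
  rewrite -!setI_eq0 -imsetI; last by move=> ? ? _ _; apply: sel_inj.
  by move/eqP->; rewrite imset0.
have up : f (sel @: ~: Vb) <= f (sel @: G2) + hi * \sum_(j in G1) f [set sel j].
  have /disj_img dG2G1 : [disjoint G2 & G1].
    by apply/pred0P => j /=; rewrite !inE; case: (j \in S); rewrite ?andbF.
  have -> : ~: Vb = G2 :|: G1.
    by apply/setP => j; rewrite !inE; case: (j \in S); case: (j \in Vb).
  have := sum_gain_ub gain_ub dG2G1.
  by rewrite -imsetU -mulr_sumr big_imset //= => ? ? _ _; apply: sel_inj.
have low : f (sel @: G2) + lo * \sum_(j in B2) f [set sel j] <= f (sel @: S).
  have /disj_img dG2B2 : [disjoint G2 & B2].
    by apply/pred0P => j /=; rewrite !inE; case: (j \in Vb); rewrite ?andbF.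
  have -> : S = G2 :|: B2.
    by apply/setP => j; rewrite !inE; case: (j \in S); case: (j \in Vb).
  have := sum_gain_lb gain_lb dG2B2.
  by rewrite -imsetU -mulr_sumr big_imset //= => ? ? _ _; apply: sel_inj.
have card_G1 : (#|G1| <= #|B2|)%N.
  have := cardsID Vb S; have := cardsID S (~: Vb).
  have -> : ~: Vb :&: S = G2 by rewrite /G2 setDE setIC.
  rewrite -/B2 -/G2 -/G1; lia.
have le_sum : \sum_(j in G1) f [set sel j] <= \sum_(j in B2) f [set sel j].
  apply: ler_sum_card card_G1 _ (fun j _ => fnn _) => i j; rewrite !inE.
  by move=> /andP[_ iVb] /andP[_ jVb]; apply: bait_dom jVb iVb (sel_valid i).
have := ler_wpM2l lo_ge0 up; have := ler_wpM2r (fnn (sel @: G2)) lo_le_hi.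
have := ler_wpM2l hi_ge0 (ler_wpM2l lo_ge0 le_sum).
have := ler_wpM2l hi_ge0 low; nra.
Qed.

Lemma bait_bound (Vb : {set 'I_N}) : #|Vb| = (alpha_s + a)%N -> (alpha_s + a < N)%N ->
  (forall i j x, i \in Vb -> j \notin Vb -> owner x = j -> f [set x] <= f [set sel i]) ->
  lo * f (sel @: ~: Vb) <= hi * W.
Proof.
move=> card_Vb lt_N bait_dom; have N_gt0 : (0 < N)%N by lia.
case/and3P: adm => As_le _ Ac_le.
have [i0 big_C] := CAA_large_component N_gt0 alpha_c_le Ac_le.
set C := Defs.comp (edges N :\: Ac) i0 in big_C *.
apply: le_trans (bait_exchange (S := ~: As :&: C) _ bait_dom) _.
  have := cardsID As C; have := subset_leq_card (subsetIr C As).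
  rewrite cardsC_ord card_Vb [~: As :&: C]setIC -setDE; lia.
by rewrite ler_wpM2l ?hi_ge0 ?PhiSL_ge_comp.
Qed.

Lemma worst_value_large O : valid_assignment owner O -> (N <= alpha_s + a)%N ->
  (forall j, best_individual owner f sel j) ->
  worst_value f alpha_s alpha_c O <= hi * (a%:R * W).
Proof.
move=> O_valid ge_N best; case/and3P: adm => As_le _ _.
have [D D_sub card_D] : exists2 D : {set 'I_N}, D \subset ~: As & #|D| = (alpha_s - #|As|)%N.
  by apply: exists_subset_card; rewrite cardsC_ord; lia.
have /eqP disj_D : As :&: D == set0 by rewrite setI_eq0 disjoint_sym disjoints_subset.
have card_As' : #|As :|: D| = alpha_s by rewrite cardsU disj_D cards0 card_D; lia.
have adm' : admissible alpha_s alpha_c (As :|: D) set0.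
  by rewrite /admissible card_As' leqnn sub0set cards0.
apply: le_trans (worst_value_le f O adm') _.
apply: bigmax_le => [|i _]; first by rewrite !mulr_ge0 ?hi_ge0 ?W_ge0.
apply: le_trans (fmono (imsetS O (subsetIl _ _))) _.
apply: small_team_le => // [|j]; first by rewrite cardsC_ord card_As'; lia.
by rewrite !inE negb_or => /andP[jAs _]; split=> //; apply: best.
Qed.

Lemma worst_value_small O (Vb : {set 'I_N}) : valid_assignment owner O ->
  #|Vb| = (alpha_s + a)%N -> (forall i, i \in Vb -> best_individual owner f sel i) ->
  worst_value f alpha_s alpha_c O <= Num.max (f (O @: ~: Vb)) (hi * (a%:R * W)).
Proof.
move=> O_valid card_Vb best; case/and3P: adm => As_le _ _.
have [B B_sub card_B] : exists2 B : {set 'I_N}, B \subset Vb :\: As & #|B| = a.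
  apply: exists_subset_card.
  have := cardsID As Vb; have := subset_leq_card (subsetIr Vb As); lia.
(* The adversary removes the sensing of the baits outside [B] and cuts [B] off. *)
have B_Vb : B \subset Vb := subset_trans B_sub (subsetDl _ _).
have card_As' : #|Vb :\: B| = alpha_s.
  by have := cardsID B Vb; rewrite (setIidPr B_Vb) card_B; lia.
have adm' : admissible alpha_s alpha_c (Vb :\: B) (cut B).
  rewrite /admissible card_As' leqnn /=; apply/andP; split.
    by apply/subsetP => e; rewrite inE => /andP[].
  by apply: leq_trans (card_cut B) _; rewrite cardsC_ord card_B CAA_mul_le.
apply: le_trans (worst_value_le f O adm') _.
apply: bigmax_le => [|i _]; first by rewrite le_max !mulr_ge0 ?hi_ge0 ?W_ge0 ?orbT.
rewrite le_max; have [iB|iB] := boolP (i \in B); apply/orP; [right | left].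
  apply: le_trans (small_team_le (A := B) O_valid _ _); rewrite ?card_B //.
    apply: fmono; apply: imsetS; apply/subsetP => j; rewrite !inE => /andP[_].
    by move/connect_cut; rewrite iB.
  move=> j /(subsetP B_sub); rewrite inE => /andP[jAs jVb].
  by split=> //; apply: best.
apply: fmono; apply: imsetS; apply/subsetP => j; rewrite !inE => /andP[].
by move=> jVbB /connect_cut; rewrite (negbTE iB) => /esym jB; rewrite jB in jVbB.
Qed.

Lemma RATT_bound (gam b : R) : 0 < hi -> 0 <= b ->
  b * hi * gam <= lo -> b * hi * a%:R <= 1 ->
  (forall (Vb : {set 'I_N}) s O, uniq s -> (forall j, (j \in s) = (j \notin Vb)) ->
     greedy_order owner f sel Vb s -> valid_assignment owner O ->
     f (O @: ~: Vb) <= gam * f (sel @: ~: Vb)) ->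
  b * opt_value owner f alpha_s alpha_c <= W.
Proof.
move=> hi_gt0 b_ge0 b_gam b_a greedy.
have le_W x : x <= hi * (a%:R * W) -> b * x <= W.
  move=> le_x; apply: le_trans (ler_wpM2l b_ge0 le_x) _.
  by rewrite !mulrA -[leRHS]mul1r ler_wpM2r ?W_ge0.
apply: mulr_bigmax_le => // [|O /forallP O_valid']; first exact: W_ge0.
have O_valid : valid_assignment owner O by move=> i; apply/eqP.
case: ratt => _ /=; case: ltnP => [lt_N | ge_N best]; last first.
  exact: le_W (worst_value_large O_valid ge_N best).
case=> Vb [s [card_Vb best bait_dom [s_uniq mem_s] s_greedy]].
apply: le_trans (ler_wpM2l b_ge0 (worst_value_small O_valid card_Vb best)) _.
rewrite maxr_pMr // ge_max; apply/andP; split; last exact: le_W.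
rewrite -(ler_pM2l hi_gt0).
have hib_ge0 : 0 <= hi * b := mulr_ge0 (ltW hi_gt0) b_ge0.
have := ler_wpM2l hib_ge0 (greedy Vb s O s_uniq mem_s s_greedy O_valid).
have := ler_wpM2r (fnn (sel @: ~: Vb)) b_gam.
have := bait_bound card_Vb lt_N bait_dom; lra.
Qed.

End Sandwich.

Lemma RATT_total_curvature_bound :
  min_bound ((1 - total_curvature f) ^+ 3) ((1 - total_curvature f) ^+ 2) a
    * opt_value owner f alpha_s alpha_c <= W.
Proof.
set beta := 1 - total_curvature f.
have beta_le1 : beta <= 1 by rewrite gerBl total_curvature_ge0.
have [->|beta_neq0] := eqVneq beta 0.
  by rewrite /min_bound !expr0n /= mul0r; case: eqP => _; rewrite ?minxx mul0r PhiSL_ge0.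
have beta_gt0 : 0 < beta by rewrite lt0r beta_neq0 subr_ge0 total_curvature_le1.
have gain_ub (Z : {set T}) y : y \notin Z -> gain f Z y <= beta^-1 * f [set y].
  move=> yZ; rewrite ler_pdivlMl // -(gain0 f0) /beta.
  by apply: total_curvature_gain; rewrite ?inE.
apply: (RATT_bound (gam := beta^-1) (ltW beta_gt0) _ _ gain_ub).
- by rewrite (le_trans beta_le1) // invf_ge1.
- by move=> Z y yZ; rewrite -(gain0 f0) total_curvature_gain ?in_set0.
- by rewrite invr_gt0.
- by rewrite min_bound_ge0 ?exprn_ge0 ?ltW.
- rewrite -mulrA -invfM ler_pdivrMr ?mulr_gt0 //.
  by apply: le_trans (min_bound_le _ _ _) _; rewrite !exprS expr0 mulr1.
- rewrite mulrAC ler_pdivrMr // mul1r; apply: le_trans (min_bound_mulr_le _ _ _) _.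
    by rewrite exprn_ge0 ?ltW.
  by rewrite expr2 ler_piMl ?(ltW beta_gt0).
- move=> Vb s O s_uniq mem_s s_greedy O_valid; rewrite ler_pdivlMl //.
  exact: greedy_total_curvature f0 fmono sel_valid O_valid s_uniq mem_s s_greedy.
Qed.

Lemma RATT_curvature_bound : submodular f ->
  min_bound ((1 - curvature f) / (1 + curvature f)) (1 - curvature f) a
    * opt_value owner f alpha_s alpha_c <= W.
Proof.
move=> fsub; have k_ge0 := curvature_ge0 f; have k_le1 := curvature_le1 fmono fnn.
have kappa_ge0 : 0 <= 1 - curvature f by rewrite subr_ge0.
have gam_gt0 : 0 < 1 + curvature f by rewrite ltr_pwDl.
have gain_ub (Z : {set T}) y : y \notin Z -> gain f Z y <= 1 * f [set y].
  by rewrite mul1r => _; apply: submodular_gain_le.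
apply: (RATT_bound (gam := 1 + curvature f) kappa_ge0 _ (curvature_gain fmono fnn fsub) gain_ub).
- by rewrite gerBl.
- exact: ltr01.
- by rewrite min_bound_ge0 // divr_ge0 // ltW.
- by rewrite mulr1 -ler_pdivlMr // min_bound_le.
- by rewrite mulr1 (le_trans (min_bound_mulr_le _ _ _)) ?gerBl.
- move=> Vb s O s_uniq mem_s s_greedy O_valid.
  exact: greedy_curvature f0 fmono sel_valid O_valid s_uniq mem_s s_greedy fnn fsub.
Qed.

End Attack.

Theorem theorem1 (R : realFieldType) (N : nat) (T : finType)
  (owner : T -> 'I_N) (Phi : {set T} -> R) (alpha_s alpha_c : nat)
  (sel : {ffun 'I_N -> T}) (As : {set 'I_N}) (Ac : {set {set 'I_N}}) :
  (forall i : 'I_N, exists x : T, owner x = i) ->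
  (alpha_s <= N)%N -> (alpha_c <= N * (N - 1) %/ 2)%N ->
  RATT_output owner Phi alpha_s alpha_c sel ->
  admissible alpha_s alpha_c As Ac ->
  (forall As' Ac', admissible alpha_s alpha_c As' Ac' ->
     PhiSL Phi sel (~: As) (edges N :\: Ac)
       <= PhiSL Phi sel (~: As') (edges N :\: Ac')) ->
  normalized Phi -> nondecreasing_set Phi -> nonnegative_set Phi ->
  (min_bound ((1 - total_curvature Phi) ^+ 3) ((1 - total_curvature Phi) ^+ 2)
       (CAA N alpha_c) * opt_value owner Phi alpha_s alpha_c
     <= PhiSL Phi sel (~: As) (edges N :\: Ac))
  /\
  (submodular Phi ->
   min_bound ((1 - curvature Phi) / (1 + curvature Phi)) (1 - curvature Phi)
       (CAA N alpha_c) * opt_value owner Phi alpha_s alpha_c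
     <= PhiSL Phi sel (~: As) (edges N :\: Ac)).
Proof.
(* The bound holds for every admissible attack. *)
move=> _ alpha_s_le; rewrite bin2_divn => alpha_c_le ratt adm _ f0 fmono fnn.
split; first exact: RATT_total_curvature_bound.
exact: RATT_curvature_bound.
Qed.
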